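(* Consider the two-good panel bundle model described in the context and suppose Assumptions 1–3 hold. Then for any $(x_s,x_t,z)$ and any $s\neq t$: (1) for each $j\in\mathcal C$: if $P_s(\{j\}\mid x_s,x_t,z)>P_t(\{j\}\mid x_s,x_t,z)$, then there exists $k\in\mathcal C$, $k\neq j$, with $\Delta_{s,t}\delta_j>\Delta_{s,t}\delta_k$; (2) for each $\ell\in\{A,B\}$, with $\ell_{-1}$ the other good: if $P_s(\{\ell,AB\}\mid x_s,x_t,z)>P_t(\{\ell,AB\}\mid x_s,x_t,z)$, then either $\Delta_{s,t}\delta_\ell>0$, or both $\Delta_{s,t}(\delta_\ell+\operatorname{sign}(\Gamma(z))\delta_{\ell_{-1}})>0$ and $|\Gamma(z)|>-\Delta_{s,t}\delta_\ell$ (or both alternatives hold); (3) if $P_s(\{AB\}\mid x_s,x_t,z)+P_t(\{O\}\mid x_s,x_t,z)>1$, then $\Gamma(z)>-\min\{\Delta_{s,t}\delta_A,\Delta_{s,t}\delta_B\}$ and $\Delta_{s,t}(\delta_A+\delta_B)>0$; and if $P_s(\{A\}\mid x_s,x_t,z)+P_t(\{B\}\mid x_s,x_t,z)>1$, then $\Gamma(z)<\min\{\Delta_{s,t}\delta_A,-\Delta_{s,t}\delta_B\}$ and $\Delta_{s,t}(\delta_A-\delta_B)>0$.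
   Context: Panel multinomial choice model with bundles: consumers $i$, periods $t=1,\dots,T$ with $T\ge 2$ fixed; two goods $A,B$ and choice set $\mathcal C=\{A,B,AB,O\}$ ($A$ = only good $A$, $B$ = only good $B$, $AB$ = both goods, $O$ = outside option). Utilities: $u_{iAt}=X_{iAt}'\beta_0+\alpha_{iA}+\epsilon_{iAt}$, $u_{iBt}=X_{iBt}'\beta_0+\alpha_{iB}+\epsilon_{iBt}$, $u_{iABt}=u_{iAt}+u_{iBt}+\Gamma_{it}$, $u_{iOt}=0$, with $X_{ijt}\in\mathbb R^{d_x}$ observed, $\alpha_{ij}\in\mathbb R$ unobserved time-invariant fixed effects, $\epsilon_{ijt}\in\mathbb R$ unobserved shocks, $\beta_0\in\mathbb R^{d_x}$ unknown. The observed choice $Y_{it}\in\mathcal C$ maximizes utility; ties occur with probability zero. $X_{it}=(X_{iAt},X_{iBt})$, $\alpha_i=(\alpha_{iA},\alpha_{iB})$, $\epsilon_{it}=(\epsilon_{iAt},\epsilon_{iBt})$. Assumption 1: $\Gamma_{it}=\Gamma(Z_i)$, $Z_i\in\mathbb R^{d_z}$ observed and time-invariant, $\Gamma$ possibly unknown. Assumption 2: at least one component of $X_{it}$ is not in $Z_i$ and has nonzero coefficient. Assumption 3: for all $s,t\le T$, $\epsilon_{is}\mid(X_{is},X_{it},Z_i,\alpha_i)$ and $\epsilon_{it}\mid(X_{is},X_{it},Z_i,\alpha_i)$ have the same distribution. Notation: $P_t(K\mid x_s,x_t,z)=\Pr(Y_{it}\in K\mid X_{is}=x_s,X_{it}=x_t,Z_i=z)$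 for $K\subset\mathcal C$. Given $X_{i\ell t}=x_{\ell t}$: $\delta_{\ell t}=x_{\ell t}'\beta_0$ for $\ell\in\{A,B\}$, $\delta_{ABt}=\delta_{At}+\delta_{Bt}$, $\delta_{Ot}=0$, and $\Delta_{s,t}\delta_j=\delta_{js}-\delta_{jt}$. $\operatorname{sign}(x)=\mathbb 1\{x>0\}-\mathbb 1\{x<0\}$. *)

From HB Require Import structures.
From mathcomp Require Import all_boot all_order all_algebra.
From mathcomp Require Import all_classical all_reals all_analysis.
Set Implicit Arguments. Unset Strict Implicit. Unset Printing Implicit Defensive.
Import Order.TTheory GRing.Theory Num.Theory.
Local Open Scope ring_scope.

Inductive alt := altA | altB | altAB | altO.

Definition other (l : alt) : alt :=
  match l with altA => altB | altB => altA | x => x end.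

Definition dotp (R : ringType) (n : nat) (u v : 'rV[R]_n) : R :=
  \sum_(i < n) u 0 i * v 0 i.

(* Mean utilities delta_{jt} given covariates x = (x_A, x_B) of a period. *)
Definition delta (R : ringType) (n : nat) (beta : 'rV[R]_n)
    (x : 'rV[R]_n * 'rV[R]_n) (j : alt) : R :=
  match j with
  | altA => dotp x.1 beta
  | altB => dotp x.2 beta
  | altAB => dotp x.1 beta + dotp x.2 beta
  | altO => 0
  end.

Definition utility (R : ringType) (n : nat) (beta : 'rV[R]_n)
    (x : 'rV[R]_n * 'rV[R]_n) (g : R) (a e : R * R) (j : alt) : R :=
  match j with
  | altA => delta beta x altA + a.1 + e.1
  | altB => delta beta x altB + a.2 + e.2
  | altAB => (delta beta x altA + a.1 + e.1) + (delta beta x altB + a.2 + e.2) + g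
  | altO => 0
  end.

From HB Require Import structures.
From mathcomp Require Import all_boot all_order all_algebra.
From mathcomp Require Import all_classical all_reals all_analysis.
From mathcomp Require Import ring lra.
Import Order.TTheory GRing.Theory Num.Theory.
Local Open Scope ring_scope.
Local Open Scope classical_set_scope.

(* Period-s utilities are the period-t utilities shifted by the index
   differences [Ddelta], and by Assumption 3 the pair (alpha, eps_s) has the
   law of (alpha, eps_t).  Hence, if for every period-t utility profile f a
   maximiser of f + Ddelta in K1 forces a maximiser of f in K2, then
   P_s(K1) <= P_t(K2), ties in period t being negligible.  Each part of the
   proposition is the contrapositive of such a deterministic
   revealed-preference implication, checked by comparing the four utilities
   of the bundle model. *)

Set Implicit Arguments.
Unset Strict Implicit.

Definition bundle_form (R : zmodType) (g : R) (f : alt -> R) :=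
  f altAB = f altA + f altB + g /\ f altO = 0.

Section Maximizers.
Variable R : realDomainType.
Implicit Types (f D : alt -> R) (K : alt -> Prop).

Definition maximizes f j := forall k, f k <= f j.

Definition has_maximizer_in f K := exists2 j, K j & maximizes f j.

Lemma exists_maximizer f : exists j, maximizes f j.
Proof.
have upper j k : exists l, f j <= f l /\ f k <= f l.
  by case: (leP (f j) (f k)) => jk; [exists k | exists j; split=> //; exact: ltW].
have [l1 [? ?]] := upper altA altB.
have [l2 [? ?]] := upper l1 altAB.
have [l3 [? ?]] := upper l2 altO.
by exists l3; case; lra.
Qed.

Lemma has_maximizer_in_of_dominated f K :
  (forall m, ~ K m -> exists2 j, K j & f m <= f j) -> has_maximizer_in f K.
Proof.
move=> dominated; have [m maxm] := exists_maximizer f.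
case: (pselect (K m)) => Km; first by exists m.
have [j Kj mj] := dominated m Km.
by exists j => // k; exact: le_trans (maxm k) mj.
Qed.

Lemma has_maximizer_neq f k j :
  j <> k -> f k <= f j -> has_maximizer_in f (fun y => y <> k).
Proof.
by move=> jk kj; apply: has_maximizer_in_of_dominated => m /contrapT ->; exists j.
Qed.

Lemma maximizes_shift f D j :
  maximizes (f \+ D) j -> (forall k, D j <= D k) -> maximizes f j.
Proof. by move=> maxj Dj k; have := maxj k; have := Dj k; rewrite /=; lra. Qed.

Variables (g : R) (f D : alt -> R).
Hypotheses (f_bundle : bundle_form g f) (D_bundle : bundle_form 0 D).

Lemma has_maximizer_good_shift l : l = altA \/ l = altB ->
  D l <= 0 -> (0 < D l + Num.sg g * D (other l) -> `|g| <= - D l) ->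
  has_maximizer_in (f \+ D) (fun y => y = l \/ y = altAB) ->
  has_maximizer_in f (fun y => y = l \/ y = altAB).
Proof.
move: f_bundle D_bundle => [fAB fO] [DAB DO] hl Dl hG [j hj maxj].
apply: has_maximizer_in_of_dominated => m hm.
have {hm} mo : m = other l \/ m = altO.
  by case: hl hm => ->; case: m => /=; tauto.
have [ml|ml] := leP (f m) (f l); first by exists l; [left|].
have [mAB|mAB] := leP (f m) (f altAB); first by exists altAB; [right|].
have {}hG : D l + Num.sg g * D (other l) <= 0 \/ `|g| <= - D l.
  by case: (leP (D l + Num.sg g * D (other l)) 0) => X; [left | right; apply: hG].
exfalso; move: (maxj altA) (maxj altB) (maxj altAB) (maxj altO) ml mAB Dl hG.
case: hj => ->; case: hl mo => -> [|] -> /=; rewrite fAB fO DAB DO;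
  have [g0|g0|g0] := ltgtP g 0;
  first [rewrite (ltr0_sg g0) (ltr0_norm g0) | rewrite (gtr0_sg g0) (gtr0_norm g0)
         | rewrite g0 sgr0 normr0];
  move=> ? ? ? ? ? ? ? [?|?]; lra.
Qed.

Lemma has_maximizer_bundle_shift :
  g <= - D altA \/ g <= - D altB \/ D altA + D altB <= 0 ->
  maximizes (f \+ D) altAB -> has_maximizer_in f (fun y => y <> altO).
Proof.
move: f_bundle D_bundle => [fAB fO] [DAB DO] hneg maxAB.
have [A0|A0] := leP (f altO) (f altA); first exact: has_maximizer_neq _ A0.
have [B0|B0] := leP (f altO) (f altB); first exact: has_maximizer_neq _ B0.
apply: (@has_maximizer_neq _ _ altAB) => //.
move: (maxAB altA) (maxAB altB) (maxAB altO) A0 B0 hneg.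
by rewrite /= fAB fO DAB DO => ? ? ? ? ? [?|[?|?]]; lra.
Qed.

Lemma has_maximizer_A_shift :
  D altA <= g \/ - D altB <= g \/ D altA - D altB <= 0 ->
  maximizes (f \+ D) altA -> has_maximizer_in f (fun y => y <> altB).
Proof.
move: f_bundle D_bundle => [fAB fO] [DAB DO] hneg maxA.
have [BA|BA] := leP (f altB) (f altA); first exact: has_maximizer_neq _ BA.
have [BO|BO] := leP (f altB) (f altO); first exact: has_maximizer_neq _ BO.
apply: (@has_maximizer_neq _ _ altAB) => //.
move: (maxA altB) (maxA altAB) (maxA altO) BA BO hneg.
by rewrite /= fAB fO DAB DO => ? ? ? ? ? [?|[?|?]]; lra.
Qed.

End Maximizers.

Section Identification.
Variables (R : realDomainType) (g : R) (D : alt -> R) (ps pt : (alt -> Prop) -> R).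
Hypothesis D_bundle : bundle_form 0 D.
Hypothesis revealed : forall K1 K2 : alt -> Prop,
  (forall f, bundle_form g f -> has_maximizer_in (f \+ D) K1 -> has_maximizer_in f K2) ->
  ps K1 <= pt K2.
Hypothesis pt_compl : forall j, pt (fun y => y <> j) = 1 - pt (fun y => y = j).

Lemma identify_alt j :
  pt (fun y => y = j) < ps (fun y => y = j) -> exists k, k <> j /\ D k < D j.
Proof.
move=> gt; apply: contrapT => /forallNP noDk.
suff: ps (fun y => y = j) <= pt (fun y => y = j) by rewrite leNgt gt.
apply: revealed => f _ [_ -> maxj]; exists j => //.
apply: maximizes_shift maxj _ => k; rewrite leNgt; apply/negP => Dkj.
by apply: (noDk k); split => // kj; rewrite kj ltxx in Dkj.
Qed.

Lemma identify_good l : l = altA \/ l = altB ->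
  pt (fun y => y = l \/ y = altAB) < ps (fun y => y = l \/ y = altAB) ->
  0 < D l \/ (0 < D l + Num.sg g * D (other l) /\ - D l < `|g|).
Proof.
move=> hl gt; have [Dl|Dl] := ltP 0 (D l); [by left | right].
apply: contrapT => hno.
suff: ps (fun y => y = l \/ y = altAB) <= pt (fun y => y = l \/ y = altAB).
  by rewrite leNgt gt.
apply: revealed => f fb; apply: (has_maximizer_good_shift fb D_bundle hl Dl) => X0.
by rewrite leNgt; apply/negP => G; apply: hno.
Qed.

Lemma identify_complements :
  1 < ps (fun y => y = altAB) + pt (fun y => y = altO) ->
  - Num.min (D altA) (D altB) < g /\ 0 < D altA + D altB.
Proof.
move=> gt1.
have impossible : ~ (g <= - D altA \/ g <= - D altB \/ D altA + D altB <= 0).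
  move=> hneg; have : ps (fun y => y = altAB) <= pt (fun y => y <> altO).
    apply: revealed => f fb [_ -> maxAB].
    exact: has_maximizer_bundle_shift fb D_bundle hneg maxAB.
  by rewrite pt_compl; lra.
have gA : - D altA < g by rewrite ltNge; apply/negP => h; apply: impossible; left.
have gB : - D altB < g by rewrite ltNge; apply/negP => h; apply: impossible; right; left.
have DAB : 0 < D altA + D altB.
  by rewrite ltNge; apply/negP => h; apply: impossible; right; right.
by rewrite ltrNl lt_min !(ltrNl g) gA gB.
Qed.

Lemma identify_substitutes :
  1 < ps (fun y => y = altA) + pt (fun y => y = altB) ->
  g < Num.min (D altA) (- D altB) /\ 0 < D altA - D altB.
Proof.
move=> gt1.
have impossible : ~ (D altA <= g \/ - D altB <= g \/ D altA - D altB <= 0).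
  move=> hneg; have : ps (fun y => y = altA) <= pt (fun y => y <> altB).
    apply: revealed => f fb [_ -> maxA].
    exact: has_maximizer_A_shift fb D_bundle hneg maxA.
  by rewrite pt_compl; lra.
have gA : g < D altA by rewrite ltNge; apply/negP => h; apply: impossible; left.
have gB : g < - D altB by rewrite ltNge; apply/negP => h; apply: impossible; right; left.
have DAB : 0 < D altA - D altB.
  by rewrite ltNge; apply/negP => h; apply: impossible; right; right.
by rewrite lt_min gA gB.
Qed.

End Identification.

Section Measurability.
Variables (d : measure_display) (X : measurableType d).
Implicit Types (S : alt -> set X).

Lemma measurable_exists_alt S :
  (forall j, measurable (S j)) -> measurable [set x | exists j, S j x].
Proof.
move=> mS.
have -> : [set x | exists j, S j x] = S altA `|` S altB `|` S altAB `|` S altO.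
  apply/seteqP; split => x /=.
    by case; case=> Sx; [do 3 left | do 2 left; right | left; right | right].
  by case=> [[[]|]|] Sx; eexists; exact: Sx.
by repeat apply: measurableU.
Qed.

Lemma measurable_forall_alt S :
  (forall j, measurable (S j)) -> measurable [set x | forall j, S j x].
Proof.
move=> mS.
have -> : [set x | forall j, S j x] = S altA `&` S altB `&` S altAB `&` S altO.
  apply/seteqP; split => x /=; first by move=> Sx; do 3 split => //.
  by move=> [[[? ?] ?] ?] [].
by repeat apply: measurableI.
Qed.

Lemma measurable_prop_and (Q : Prop) (A : set X) :
  measurable A -> measurable [set x | Q /\ A x].
Proof.
move=> mA; case: (pselect Q) => q.
  by rewrite (_ : [set x | Q /\ A x] = A) //; apply/seteqP; split => x //=; case.
by rewrite (_ : [set x | Q /\ A x] = set0) //; apply/seteqP; split => x //=; case.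
Qed.

Lemma measurable_choice (Y : X -> alt) (K : alt -> Prop) :
  (forall j, measurable [set x | Y x = j]) -> measurable [set x | K (Y x)].
Proof.
move=> mY; have -> : [set x | K (Y x)] = [set x | exists j, K j /\ Y x = j].
  by apply/seteqP; split => x /=; [exists (Y x) | move=> [j [? ->]]].
by apply: measurable_exists_alt => j; exact: measurable_prop_and (mY j).
Qed.

Variable R : realType.

Lemma measurable_ler_set (f g : X -> R) :
  measurable_fun setT f -> measurable_fun setT g -> measurable [set x | f x <= g x].
Proof.
move=> mf mg; rewrite -[X in measurable X]setTI.
by apply: (measurable_realfun.measurable_fun_ler mf mg measurableT).
Qed.

Lemma measurable_eqr_set (f g : X -> R) :
  measurable_fun setT f -> measurable_fun setT g -> measurable [set x | f x = g x].
Proof.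
move=> mf mg.
have -> : [set x | f x = g x] = [set x | f x <= g x] `&` [set x | g x <= f x].
  apply/seteqP; split => x /=; first by move=> ->.
  by case=> fg gf; apply/le_anti; rewrite fg gf.
by apply: measurableI; exact: measurable_ler_set.
Qed.

Variable u : X -> alt -> R.
Hypothesis mu : forall j, measurable_fun setT (fun x => u x j).

Lemma measurable_maximizes j : measurable [set x | maximizes (u x) j].
Proof. by apply: measurable_forall_alt => k; exact: measurable_ler_set. Qed.

Lemma measurable_has_maximizer_in K : measurable [set x | has_maximizer_in (u x) K].
Proof.
rewrite (_ : [set x | _] = [set x | exists j, K j /\ maximizes (u x) j]).
  apply: measurable_exists_alt => j; apply: measurable_prop_and.
  exact: measurable_maximizes.
by apply/seteqP; split => x /= [j]; [exists j | case=> Kj; exists j].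
Qed.

Lemma measurable_ties :
  measurable [set x | exists j k, j <> k /\ maximizes (u x) j /\ u x k = u x j].
Proof.
apply: measurable_exists_alt => j; apply: measurable_exists_alt => k.
apply: measurable_prop_and; apply: measurableI; first exact: measurable_maximizes.
exact: measurable_eqr_set.
Qed.

End Measurability.

Definition choice_prob (R : realType) d (Omega : measurableType d)
    (P : probability Omega R) (Y : Omega -> alt) (K : alt -> Prop) : R :=
  fine (P [set w | K (Y w)]).

Lemma choice_prob_compl (R : realType) d (Omega : measurableType d)
    (P : probability Omega R) (Y : Omega -> alt) j :
  measurable [set w | Y w = j] ->
  choice_prob P Y (fun y => y <> j) = 1 - choice_prob P Y (fun y => y = j).
Proof.
move=> mYj; rewrite /choice_prob.
change [set w | Y w <> j] with (~` [set w | Y w = j]).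
by rewrite probability_setC // fineB ?fin_num_measure.
Qed.

Section StationaryShocks.
Variables (R : realType) (d : measure_display) (Omega : measurableType d).
Variables (P : probability Omega R) (alpha es et : Omega -> R * R) (Ys Yt : Omega -> alt).
Variables (g : R) (D : alt -> R) (u : R * R -> R * R -> alt -> R).
Hypothesis u_bundle : forall a e, bundle_form g (u a e).
Hypothesis mu :
  forall j, measurable_fun setT (fun ae : (R * R) * (R * R) => u ae.1 ae.2 j).
Hypothesis m_es : measurable_fun setT (fun w => (alpha w, es w)).
Hypothesis m_et : measurable_fun setT (fun w => (alpha w, et w)).
Hypothesis mYs : forall j, measurable [set w | Ys w = j].
Hypothesis mYt : forall j, measurable [set w | Yt w = j].
Hypothesis Ys_max : forall w, maximizes (u (alpha w) (es w) \+ D) (Ys w).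
Hypothesis Yt_max : forall w, maximizes (u (alpha w) (et w)) (Yt w).
Hypothesis no_ties_t : P [set w | exists j k, j <> k /\
  maximizes (u (alpha w) (et w)) j /\ u (alpha w) (et w) k = u (alpha w) (et w) j] = 0%E.
Hypothesis stationary : forall A, measurable A ->
  P ((fun w => (alpha w, es w)) @^-1` A) = P ((fun w => (alpha w, et w)) @^-1` A).

Lemma choice_prob_le K1 K2 :
  (forall f, bundle_form g f -> has_maximizer_in (f \+ D) K1 -> has_maximizer_in f K2) ->
  choice_prob P Ys K1 <= choice_prob P Yt K2.
Proof.
move=> transfer.
pose S := [set ae : (R * R) * (R * R) | has_maximizer_in (u ae.1 ae.2) K2].
have mS : measurable S := measurable_has_maximizer_in mu K2.
have mpre (h : Omega -> (R * R) * (R * R)) :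
    measurable_fun setT h -> measurable (h @^-1` S).
  by move=> mh; have := mh measurableT _ mS; rewrite setTI.
have mties := measurable_ties (fun j => measurableT_comp (mu j) m_et).
have mK1 := measurable_choice K1 mYs; have mK2 := measurable_choice K2 mYt.
apply: fine_le; rewrite ?fin_num_measure //.
apply: (@le_trans _ _ (P ((fun w => (alpha w, es w)) @^-1` S))).
  apply: le_measure; rewrite ?inE; [exact: mK1 | exact: mpre |].
  move=> w K1w; apply: (transfer _ (u_bundle (alpha w) (es w))).
  by exists (Ys w) => //; exact: Ys_max.
rewrite stationary // -(measureU0 mK2 mties no_ties_t).
apply: le_measure; rewrite ?inE; [exact: mpre | exact: measurableU |].
move=> w /= [j K2j maxj]; case: (pselect (K2 (Yt w))) => K2Y; [by left | right].
exists (Yt w), j; split; first by move=> Yj; apply: K2Y; rewrite Yj.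
by split; [exact: Yt_max | apply/le_anti; rewrite maxj Yt_max].
Qed.

End StationaryShocks.

Lemma utility_bundle (R : nzRingType) n (beta : 'rV[R]_n) x g a e :
  bundle_form g (utility beta x g a e).
Proof. by []. Qed.

Lemma delta_shift_bundle (R : comNzRingType) n (beta : 'rV[R]_n) xs xt :
  bundle_form 0 (fun j => delta beta xs j - delta beta xt j).
Proof. by split; rewrite /=; ring. Qed.

Lemma utility_shift (R : comNzRingType) n (beta : 'rV[R]_n) xs xt g a e j :
  utility beta xs g a e j
  = utility beta xt g a e j + (delta beta xs j - delta beta xt j).
Proof. by case: j => /=; ring. Qed.

Lemma measurable_utility (R : realType) n (beta : 'rV[R]_n) x g j :
  measurable_fun setT (fun ae : (R * R) * (R * R) => utility beta x g ae.1 ae.2 j).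
Proof.
have m11 : measurable_fun setT (fun ae : (R * R) * (R * R) => ae.1.1).
  exact: measurableT_comp measurable_fst measurable_fst.
have m12 : measurable_fun setT (fun ae : (R * R) * (R * R) => ae.1.2).
  exact: measurableT_comp measurable_snd measurable_fst.
have m21 : measurable_fun setT (fun ae : (R * R) * (R * R) => ae.2.1).
  exact: measurableT_comp measurable_fst measurable_snd.
have m22 : measurable_fun setT (fun ae : (R * R) * (R * R) => ae.2.2).
  exact: measurableT_comp measurable_snd measurable_snd.
by case: j => /=; repeat apply: measurable_realfun.measurable_funD.
Qed.

Theorem proposition2
  (R : realType) (dx dz : nat) (T : nat) (hT : (2 <= T)%N) (s t : 'I_T) (hst : s != t)
  (beta0 : 'rV[R]_dx) (hbeta : beta0 != 0)
  (Gamma : 'rV[R]_dz -> R)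
  (xs xt : 'rV[R]_dx * 'rV[R]_dx) (z : 'rV[R]_dz)
  (* probability space representing the conditional law given
     X_is = xs, X_it = xt, Z_i = z *)
  (d : measure_display) (Omega : measurableType d) (P : probability Omega R)
  (alpha : Omega -> R * R) (eps : 'I_T -> Omega -> R * R) (Y : 'I_T -> Omega -> alt)
  (malpha : measurable_fun setT alpha)
  (meps_s : measurable_fun setT (eps s)) (meps_t : measurable_fun setT (eps t))
  (mY : forall r j, measurable [set w | Y r w = j])
  (* utility maximization in periods s and t (Assumption 1: Gamma_it = Gamma(z)) *)
  (hYs : forall w k, utility beta0 xs (Gamma z) (alpha w) (eps s w) k
                     <= utility beta0 xs (Gamma z) (alpha w) (eps s w) (Y s w))
  (hYt : forall w k, utility beta0 xt (Gamma z) (alpha w) (eps t w) k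
                     <= utility beta0 xt (Gamma z) (alpha w) (eps t w) (Y t w))
  (* ties occur with probability zero *)
  (hties_s : P [set w | exists j k, j <> k /\
        (forall m, utility beta0 xs (Gamma z) (alpha w) (eps s w) m
                   <= utility beta0 xs (Gamma z) (alpha w) (eps s w) j) /\
        utility beta0 xs (Gamma z) (alpha w) (eps s w) k
        = utility beta0 xs (Gamma z) (alpha w) (eps s w) j] = 0%E)
  (hties_t : P [set w | exists j k, j <> k /\
        (forall m, utility beta0 xt (Gamma z) (alpha w) (eps t w) m
                   <= utility beta0 xt (Gamma z) (alpha w) (eps t w) j) /\
        utility beta0 xt (Gamma z) (alpha w) (eps t w) k
        = utility beta0 xt (Gamma z) (alpha w) (eps t w) j] = 0%E)
  (* Assumption 3: eps_s and eps_t have the same conditional law given alpha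
     (and the conditioning covariates) *)
  (hA3 : forall A : set ((R * R) * (R * R)), measurable A ->
      P ((fun w => (alpha w, eps s w)) @^-1` A)
      = P ((fun w => (alpha w, eps t w)) @^-1` A)) :
  let Ddelta := fun j => delta beta0 xs j - delta beta0 xt j in
  let Pr := fun (r : 'I_T) (K : alt -> Prop) => fine (P [set w | K (Y r w)]) in
  (* (1) *)
  (forall j : alt, Pr s (fun y => y = j) > Pr t (fun y => y = j) ->
     exists k : alt, k <> j /\ Ddelta j > Ddelta k) /\
  (* (2) *)
  (forall l : alt, (l = altA \/ l = altB) ->
     Pr s (fun y => y = l \/ y = altAB) > Pr t (fun y => y = l \/ y = altAB) ->
     Ddelta l > 0 \/
     (Ddelta l + Num.sg (Gamma z) * Ddelta (other l) > 0 /\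
      `|Gamma z| > - Ddelta l)) /\
  (* (3) *)
  (Pr s (fun y => y = altAB) + Pr t (fun y => y = altO) > 1 ->
     Gamma z > - Num.min (Ddelta altA) (Ddelta altB) /\
     Ddelta altA + Ddelta altB > 0) /\
  (Pr s (fun y => y = altA) + Pr t (fun y => y = altB) > 1 ->
     Gamma z < Num.min (Ddelta altA) (- Ddelta altB) /\
     Ddelta altA - Ddelta altB > 0).
Proof.
move=> Ddelta Pr.
have Ys_max w :
    maximizes (utility beta0 xt (Gamma z) (alpha w) (eps s w) \+ Ddelta) (Y s w).
  by move=> k; rewrite /= -!utility_shift; exact: hYs.
have revealed := choice_prob_le (utility_bundle beta0 xt (Gamma z))
  (measurable_utility beta0 xt (Gamma z)) (measurable_fun_pair malpha meps_s)
  (measurable_fun_pair malpha meps_t) (mY s) (mY t) Ys_max hYt hties_t hA3.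
have Ddelta_bundle : bundle_form 0 Ddelta := delta_shift_bundle beta0 xs xt.
have pt_compl j := choice_prob_compl P (mY t j).
split; first exact: identify_alt revealed.
split; first exact: identify_good Ddelta_bundle revealed.
split; first exact: identify_complements revealed pt_compl.
exact: identify_substitutes revealed pt_compl.
Qed.
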